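(* Every tree with at least three vertices has at least one saturated vertex.
   Context: A $2$-matching of a graph $G$ is a set of edges such that every vertex is incident to at most two of them; a maximum $2$-matching is one of largest possible size. A vertex $w$ is saturated in $G$ if every maximum $2$-matching of $G$ has exactly two edges incident to $w$. *)

From mathcomp Require Import all_boot.
Set Implicit Arguments. Unset Strict Implicit. Unset Printing Implicit Defensive.

Definition simple_graph (T : finType) (e : rel T) : Prop :=
  symmetric e /\ irreflexive e.

Definition edges (T : finType) (e : rel T) : {set {set T}} :=
  [set E : {set T} | [exists x, exists y, e x y && (E == [set x; y])]].

Definition connected_graph (T : finType) (e : rel T) : Prop :=
  forall x y : T, connect e x y.

Definition acyclic_graph (T : finType) (e : rel T) : Prop :=
  forall c : seq T, uniq c -> 3 <= size c -> ~~ cycle e c.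

Definition is_tree (T : finType) (e : rel T) : Prop :=
  simple_graph e /\ connected_graph e /\ acyclic_graph e.

Definition incident (T : finType) (M : {set {set T}}) (v : T) : {set {set T}} :=
  [set E in M | v \in E].

Definition two_matching (T : finType) (e : rel T) (M : {set {set T}}) : Prop :=
  M \subset edges e /\ forall v : T, #|incident M v| <= 2.

Definition max_two_matching (T : finType) (e : rel T) (M : {set {set T}}) : Prop :=
  two_matching e M /\ forall M', two_matching e M' -> #|M'| <= #|M|.

Definition saturated (T : finType) (e : rel T) (w : T) : Prop :=
  forall M, max_two_matching e M -> #|incident M w| = 2.

From mathcomp Require Import all_boot.
Set Implicit Arguments. Unset Strict Implicit. Unset Printing Implicit Defensive.

(* Call a neighbour c of w sparse when c has at most one neighbour other than
   w. A vertex w with two sparse neighbours c1, c2 is saturated: a 2-matching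
   M with at most one edge at w misses one of wc1, wc2, say wc1, and c1 then
   lies on at most one edge of M, so M + wc1 is a larger 2-matching.
   In a tree with at least three vertices, take a longest path x v1 v2 ...
   By maximality, every neighbour of v1 other than v2 is a leaf, and so is
   every neighbour, other than v2, of a neighbour z of v2 off the path. Then
   either v1 has a second leaf neighbour besides x (w = v1), or v2 has no
   neighbour off the path and x, v2 are sparse neighbours of v1 (w = v1), or
   such a z exists and either carries two leaves (w = z) or is, like v1, a
   sparse neighbour of v2 (w = v2). *)

Section TwoMatchings.

Variables (T : finType) (e : rel T).

Definition other_neighbours (c w : T) : {set T} := [set a | e c a & a != w].

Lemma other_neighbours_le1 (c w d : T) :
  (forall a, e c a -> a != w -> a = d) -> #|other_neighbours c w| <= 1.
Proof.
move=> only_d; apply/card_le1_eqP => a b.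
by rewrite !inE => /andP[eca aw] /andP[ecb bw]; rewrite (only_d a) // (only_d b).
Qed.

Lemma set2_injr (w a b : T) : [set w; a] = [set w; b] -> a = b.
Proof.
move=> eq_ab; have /set2P[aw|//] : a \in [set w; b] by rewrite -eq_ab set22.
have /set2P[bw|//] : b \in [set w; a] by rewrite eq_ab set22.
by rewrite aw bw.
Qed.

Lemma edge_set2 (x y : T) : e x y -> [set x; y] \in edges e.
Proof.
by move=> exy; rewrite inE; apply/existsP; exists x; apply/existsP; exists y; rewrite exy eqxx.
Qed.

Lemma edgesP (E : {set T}) :
  E \in edges e -> exists x y, e x y /\ E = [set x; y].
Proof. by rewrite inE => /existsP[x /existsP[y /andP[exy /eqP->]]]; exists x, y. Qed.

Lemma card_incident_setU1 (E : {set T}) (M : {set {set T}}) (v : T) :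
  #|incident (E |: M) v| <= (v \in E) + #|incident M v|.
Proof.
have -> : incident (E |: M) v = (if v \in E then [set E] else set0) :|: incident M v.
  apply/setP => F; rewrite !inE.
  by case: (F =P E) => [->|/eqP/negbTE FE]; case: (v \in E); rewrite ?inE ?eqxx ?FE ?andbF.
rewrite (leq_trans (leq_card_setU _ _)) // leq_add2r.
by case: (v \in E); rewrite ?cards1 ?cards0.
Qed.

Lemma two_matching_setU1 (M : {set {set T}}) (w c : T) :
  two_matching e M -> e w c -> #|incident M w| <= 1 -> #|incident M c| <= 1 ->
  two_matching e ([set w; c] |: M).
Proof.
move=> [Me degM] ewc degw degc; split.
  by apply/subsetP => E /setU1P[->|/(subsetP Me)//]; apply: edge_set2.
move=> v; apply: leq_trans (card_incident_setU1 _ _ _) _.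
by case/boolP: (v \in [set w; c]) => [/set2P[]->|] //; rewrite add0n.
Qed.

Hypothesis sym : symmetric e.

Lemma card_incident_le1 (M : {set {set T}}) (w c : T) :
  M \subset edges e -> [set w; c] \notin M -> #|other_neighbours c w| <= 1 ->
  #|incident M c| <= 1.
Proof.
move=> Me wcM /card_le1_eqP one_other.
have edge_at_c E : E \in incident M c -> exists2 d, d \in other_neighbours c w & E = [set c; d].
  rewrite inE => /andP[EM cE]; have [x [y [exy defE]]] := edgesP (subsetP Me E EM).
  have [d [ecd defEd]] : exists d, e c d /\ E = [set c; d].
    move: cE; rewrite defE => /set2P[]->; first by exists y.
    by exists x; rewrite sym setUC.
  exists d => //; rewrite inE ecd; apply: contraNneq wcM => dw.
  by rewrite -dw setUC -defEd.
apply/card_le1_eqP => E1 E2 /edge_at_c[d1 d1c ->] /edge_at_c[d2 d2c ->].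
by rewrite (one_other d1 d2).
Qed.

Lemma saturated_of_two_sparse_neighbours (w c1 c2 : T) :
  e w c1 -> e w c2 -> c1 != c2 ->
  #|other_neighbours c1 w| <= 1 -> #|other_neighbours c2 w| <= 1 ->
  saturated e w.
Proof.
move=> ewc1 ewc2 c12 sparse1 sparse2 M [[Me degM] maxM].
apply/eqP; rewrite eqn_leq degM leqNgt; apply/negP => degw.
have [c [ewc sparse wcM]] :
    exists c, [/\ e w c, #|other_neighbours c w| <= 1 & [set w; c] \notin M].
  case/boolP: ([set w; c1] \in M) => [wc1M|]; last by exists c1.
  case/boolP: ([set w; c2] \in M) => [wc2M|]; last by exists c2.
  have two_at_w : 1 < #|incident M w|.
    apply/card_gt1P; exists [set w; c1], [set w; c2].
    rewrite !inE wc1M wc2M !eqxx; split=> //.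
    by apply: contraNneq c12 => /set2_injr->.
  by rewrite ltnNge -ltnS degw in two_at_w.
have tm := two_matching_setU1 (conj Me degM) ewc degw (card_incident_le1 Me wcM sparse).
by have := maxM _ tm; rewrite cardsU1 wcM ltnn.
Qed.

End TwoMatchings.

Definition upath (T : finType) (e : rel T) (x : T) (s : seq T) :=
  path e x s && uniq (x :: s).

Lemma connected_card_le_size (T : finType) (e : rel T) (x : T) (s : seq T) :
  symmetric e -> connected_graph e ->
  (forall a b, e a b -> a \in s -> b \in s) -> x \in s -> #|T| <= size s.
Proof.
move=> sym conn closed_s xs; apply: leq_trans (card_size s).
apply/subset_leq_card/subsetP => z _.
by rewrite -(closed_connect (intro_closed (sym_connect_sym sym) closed_s) (conn x z)).
Qed.

Section Forests.

Variables (T : finType) (e : rel T).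
Hypotheses (sym : symmetric e) (irr : irreflexive e) (acyc : acyclic_graph e).

Lemma upath_behead (x u : T) (p : seq T) : upath e x (u :: p) -> upath e u p.
Proof. by case/andP=> /andP[_ pth] /andP[_ uq]; apply/andP. Qed.

Lemma upath_chord (u y : T) (p : seq T) :
  upath e u p -> e u y -> y \in p -> y = head u p.
Proof.
move=> up euy yp; move: up; case/splitPr: yp => [[|z p1] p2] // /andP[pth uq].
have {}pth : path e u (rcons (z :: p1) y).
  by move: pth; rewrite -cat_rcons cat_path => /andP[].
have {}uq : uniq (u :: rcons (z :: p1) y).
  by move: uq; rewrite -cat_rcons -cat_cons cat_uniq => /andP[].
have size3 : 3 <= size (u :: rcons (z :: p1) y) by rewrite /= size_rcons.
have /negP[] := acyc uq size3.
by rewrite /= rcons_path; move: pth => /= /andP[-> ->]; rewrite last_rcons sym.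
Qed.

Lemma upath_cons (u y : T) (p : seq T) :
  upath e u p -> e y u -> y != head u p -> upath e y (u :: p).
Proof.
move=> up eyu yh; have /andP[pth uq] := up.
have yu : y != u by apply: contraTneq eyu => ->; rewrite irr.
have yp : y \notin p by apply: contra yh => /(upath_chord up)-> //; rewrite sym.
by rewrite /upath /= eyu pth /= inE negb_or yu yp.
Qed.

Lemma exists_longest_upath (x0 : T) :
  exists x s, upath e x s /\ forall y t, upath e y t -> size t <= size s.
Proof.
pose P n := [exists x, exists t : n.-tuple T, upath e x t].
have P0 : exists n, P n.
  by exists 0; apply/existsP; exists x0; apply/existsP; exists [tuple].
have P_bounded n : P n -> n <= #|T|.
  case/existsP => x /existsP[t /andP[_ uq]].
  by rewrite -(size_tuple t) ltnW //; have := max_card (mem (x :: t)); rewrite (card_uniqP uq).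
case: (ex_maxnP P0 P_bounded) => N /existsP[x /existsP[s ps]] maxN.
exists x, s; split=> // y t yt; rewrite size_tuple; apply: maxN.
by apply/existsP; exists y; apply/existsP; exists (in_tuple t).
Qed.

Section LongestUpath.

Variable N : nat.
Hypothesis longest : forall y t, upath e y t -> size t <= N.

Lemma longest_upath_end (y a : T) (t : seq T) :
  upath e y t -> size t = N -> e y a -> a = head y t.
Proof.
move=> yt tN eya; apply/eqP/contraT => ah.
by have := longest (upath_cons yt (etrans (sym a y) eya) ah); rewrite /= tN ltnn.
Qed.

Lemma longest_upath_leaf (u y : T) (p : seq T) :
  upath e u p -> (size p).+1 = N -> e u y -> y != head u p ->
  #|other_neighbours e y u| <= 1.
Proof.
move=> up pN euy yh; apply: (other_neighbours_le1 (d := u)) => a eya _.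
apply: (longest_upath_end (y := y) (t := u :: p)) => //.
by apply: upath_cons => //; rewrite sym.
Qed.

Lemma longest_upath_size (x : T) (s : seq T) :
  connected_graph e -> 3 <= #|T| -> upath e x s -> size s = N -> 2 <= N.
Proof.
move=> conn T3 xs sN; rewrite -sN.
case: s xs sN => [|v1 [|v2 r]] // xs sN; exfalso.
  have x_isolated a b : e a b -> a \in [:: x] -> b \in [:: x].
    rewrite inE => eab /eqP ax; rewrite ax in eab.
    by have := longest_upath_end xs sN eab; rewrite /= => bx; rewrite bx irr in eab.
  by have := connected_card_le_size sym conn x_isolated (mem_head x [::]); rewrite leqNgt (ltnW T3).
have v1x : upath e v1 [:: x].
  by case/andP: xs => /andP[exv1 _]; rewrite /upath /= sym exv1 !inE !andbT eq_sym.
have edge_closed a b : e a b -> a \in [:: x; v1] -> b \in [:: x; v1].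
  move=> eab; rewrite !inE => /orP[]/eqP ax; rewrite ax in eab.
    by rewrite (longest_upath_end xs sN eab) eqxx orbT.
  by rewrite (longest_upath_end v1x sN eab) eqxx.
by have := connected_card_le_size sym conn edge_closed (mem_head x _); rewrite leqNgt T3.
Qed.

Section NearLongestUpathEnd.

Variables (x v1 v2 : T) (r : seq T).
Hypothesis xr : upath e x [:: v1, v2 & r].
Hypothesis size_r : N = (size r).+2.

Lemma exists_saturated_near_longest_upath_end : exists w, saturated e w.
Proof.
have v1r := upath_behead xr; have v2r := upath_behead v1r.
have ev1x : e v1 x by rewrite sym; case/andP: xr => /andP[].
have ev1v2 : e v1 v2 by case/andP: v1r => /andP[].
have xv2 : x != v2 by case/andP: xr => _; rewrite /= !inE !negb_or => /andP[/and3P[]].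
case: (boolP [exists y, [&& e v1 y, y != x & y != v2]]) =>
    [/existsP[y /and3P[ev1y yx yv2]]|/existsPn v1_deg2].
  exists v1; apply: (saturated_of_two_sparse_neighbours sym ev1x ev1y).
  - by rewrite eq_sym.
  - exact: (longest_upath_leaf v1r).
  - exact: (longest_upath_leaf v1r).
have v1_sparse : #|other_neighbours e v1 v2| <= 1.
  apply: (other_neighbours_le1 (d := x)) => a ev1a av2; apply/eqP.
  by move: (v1_deg2 a); rewrite ev1a av2 andbT negbK.
case: (boolP [exists z, [&& e v2 z, z != v1 & z != head v2 r]]) =>
    [/existsP[z /and3P[ev2z zv1 zh]]|/existsPn v2_deg2].
  have zr : upath e z (v2 :: r) by apply: upath_cons => //; rewrite sym.
  case: (leqP #|other_neighbours e z v2| 1) => [z_sparse|/card_gt1P[y1 [y2 []]]].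
    have ev2v1 : e v2 v1 by rewrite sym.
    by exists v2; apply: (saturated_of_two_sparse_neighbours sym ev2v1 ev2z); rewrite // eq_sym.
  rewrite !inE => /andP[ezy1 y1v2] /andP[ezy2 y2v2] y12.
  by exists z; apply: (saturated_of_two_sparse_neighbours sym ezy1 ezy2 y12);
    apply: (longest_upath_leaf zr).
have v2_sparse : #|other_neighbours e v2 v1| <= 1.
  apply: (other_neighbours_le1 (d := head v2 r)) => a ev2a av1; apply/eqP.
  by move: (v2_deg2 a); rewrite ev2a av1 negbK.
exists v1; apply: (saturated_of_two_sparse_neighbours sym ev1x ev1v2 xv2) => //.
exact: (longest_upath_leaf v1r).
Qed.

End NearLongestUpathEnd.

End LongestUpath.

End Forests.

Theorem corollary2p7 (T : finType) (e : rel T) :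
  is_tree e -> 3 <= #|T| -> exists w : T, saturated e w.
Proof.
move=> [[sym irr] [conn acyc]] T3.
have /card_gt0P[x0 _] : 0 < #|T| by apply: leq_trans T3.
have [x [s [xs longest]]] := exists_longest_upath e x0.
have := longest_upath_size sym irr acyc longest conn T3 xs erefl.
case: s xs longest => [|v1 [|v2 r]] // xs longest _.
exact: (exists_saturated_near_longest_upath_end sym irr acyc longest xs erefl).
Qed.
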